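(* Let $M$ be an oriented Legendrian knot mosaic representing a Legendrian knot $\Lambda$. Let $U$ and $D$ be the numbers of upward- and downward-oriented cusps in the diagram depicted by $M$, let $N$ be the number of negative crossings, and let $|M|_{T_5}$ and $|M|_{T_6}$ be the numbers of tiles of $M$ equal to $T_5$ and $T_6$ respectively. If $U\ge D$, then $$2|\operatorname{rot}(\Lambda)|\le 2N+|M|_{T_5}+|M|_{T_6}.$$
   Context: Legendrian knots are taken in the standard contact structure on $\mathbb{R}^3$ and represented by front ($xz$-) projections, which have cusps in place of vertical tangencies and in which the strand of more negative slope is the overstrand at every crossing. For an oriented front diagram with $D$ downward-oriented cusps (cusps traversed moving downward) and $U$ upward-oriented cusps, $\operatorname{rot}=\frac12(D-U)$. Legendrian mosaic tiles: take a square tile whose four edge midpoints are potential connection points. The tiles are $T_0$ (empty); $T_1,T_2,T_3,T_4$ (a single arc joining the midpoints of two adjacent edges, one tile for each of the four pairs of adjacent edges); $T_5,T_6$ (a single straight segment joining the midpoints of two opposite edges, one for each pair); $T_7,T_8$ (two disjoint arcs, each joining midpoints of two adjacent edges, together using all four midpoints); $T_{10}$ (two segments joining opposite edges and crossing once). A Legendrian $n$-mosaic is an $n\times n$ array of these tiles, with the whole array rotated $45^\circ$ counterclockwise so that the strands form a front diagram: after rotation the arc of $T_2$, the arc of $T_4$ and both arcs of $T_8$ each contain a cusp, the arcs of $T_1,T_3,T_7$ contain no cusp, $T_5,T_6$ are straight segments of slope $\pm1$, and in $T_{10}$ the strand of negative slope passes over. The mosaic is suitably connected if connection points agree across every shared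 edge and no connection point lies on the outer boundary; it then depicts a Legendrian link front. An oriented Legendrian knot mosaic is a suitably connected Legendrian mosaic depicting a knot, together with an orientation of that knot. *)

From HB Require Import structures.
From mathcomp Require Import all_boot all_order all_algebra.
Set Implicit Arguments. Unset Strict Implicit. Unset Printing Implicit Defensive.
Import Order.TTheory GRing.Theory Num.Theory.

(* Edge midpoints of an (unrotated) tile: North, East, South, West.
   After the 45-degree counterclockwise rotation: N = upper-left,
   E = upper-right, S = lower-right, W = lower-left. *)
Inductive dir := DN | DE | DS | DW.

Definition dir_code (d : dir) : nat :=
  match d with DN => 0 | DE => 1 | DS => 2 | DW => 3 end.
Definition dir_eqb (a b : dir) : bool := dir_code a == dir_code b.
Lemma dir_eqP : Equality.axiom dir_eqb.
Proof. by move=> x y; apply: (iffP idP); [case: x; case: y | move=> ->; case: y]. Qed.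
HB.instance Definition _ := hasDecEq.Build dir dir_eqP.

(* Legendrian mosaic tiles (T9 is not a Legendrian tile).
   T1: W-S, T2: E-S, T3: N-E, T4: N-W (arcs), T5: W-E, T6: N-S (segments),
   T7: W-S and N-E, T8: E-S and N-W, T10: N-S and W-E crossing with the
   N-S strand (slope -1 after rotation) over. *)
Inductive tile := T0 | T1 | T2 | T3 | T4 | T5 | T6 | T7 | T8 | T10.

Definition tile_code (t : tile) : nat :=
  match t with T0 => 0 | T1 => 1 | T2 => 2 | T3 => 3 | T4 => 4 | T5 => 5
  | T6 => 6 | T7 => 7 | T8 => 8 | T10 => 10 end.
Definition tile_eqb (a b : tile) : bool := tile_code a == tile_code b.
Lemma tile_eqP : Equality.axiom tile_eqb.
Proof. by move=> x y; apply: (iffP idP); [case: x; case: y | move=> ->; case: y]. Qed.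
HB.instance Definition _ := hasDecEq.Build tile tile_eqP.

Definition pieces (t : tile) : seq (dir * dir) :=
  match t with
  | T0 => [::]
  | T1 => [:: (DW, DS)]
  | T2 => [:: (DE, DS)]
  | T3 => [:: (DN, DE)]
  | T4 => [:: (DN, DW)]
  | T5 => [:: (DW, DE)]
  | T6 => [:: (DN, DS)]
  | T7 => [:: (DW, DS); (DN, DE)]
  | T8 => [:: (DE, DS); (DN, DW)]
  | T10 => [:: (DN, DS); (DW, DE)]
  end.

Definition has_conn (t : tile) (d : dir) : bool :=
  has (fun p => (p.1 == d) || (p.2 == d)) (pieces t).

Definition opp (d : dir) : dir :=
  match d with DN => DS | DS => DN | DE => DW | DW => DE end.

(* A mosaic: M i j is the tile in row i (row 0 on top) and column j
   (column 0 on the left), before the 45-degree rotation. *)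
Definition mosaic (n : nat) := 'I_n -> 'I_n -> tile.

Definition suitably_connected (n : nat) (M : mosaic n) : Prop :=
  (forall i i' j : 'I_n, val i' = (val i).+1 ->
      has_conn (M i j) DS = has_conn (M i' j) DN) /\
  (forall i j j' : 'I_n, val j' = (val j).+1 ->
      has_conn (M i j) DE = has_conn (M i j') DW) /\
  (forall i j : 'I_n, val i = 0 -> ~~ has_conn (M i j) DN) /\
  (forall i j : 'I_n, val i = n.-1 -> ~~ has_conn (M i j) DS) /\
  (forall i j : 'I_n, val j = 0 -> ~~ has_conn (M i j) DW) /\
  (forall i j : 'I_n, val j = n.-1 -> ~~ has_conn (M i j) DE).

(* A traversal step: a cell, the edge through which the strand enters the
   cell and the edge through which it leaves. *)
Definition step (n : nat) := (('I_n * 'I_n) * (dir * dir))%type.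

Definition adjacent (n : nat) (c c' : 'I_n * 'I_n) (d : dir) : bool :=
  match d with
  | DN => ((val c'.1).+1 == val c.1) && (val c'.2 == val c.2)
  | DS => (val c'.1 == (val c.1).+1) && (val c'.2 == val c.2)
  | DE => (val c'.1 == val c.1) && (val c'.2 == (val c.2).+1)
  | DW => (val c'.1 == val c.1) && ((val c'.2).+1 == val c.2)
  end.

Definition follows (n : nat) (x y : step n) : bool :=
  adjacent x.1 y.1 x.2.2 && (y.2.1 == opp x.2.2).

Definition same_piece (p q : dir * dir) : bool :=
  (p == q) || (p == (q.2, q.1)).

(* This encodes that the depicted link has a
   single component (is a knot) and fixes an orientation of it. *)
Definition oriented_knot_mosaic (n : nat) (M : mosaic n) (s : seq (step n)) : Prop :=
  [/\ suitably_connected M,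
      0 < size s,
      cycle (@follows n) s,
      (forall x, x \in s -> has (same_piece x.2) (pieces (M x.1.1 x.1.2))) &
      (forall (c : 'I_n * 'I_n) p, p \in pieces (M c.1 c.2) ->
          count (fun x : step n => (x.1 == c) && same_piece x.2 p) s = 1)].

(* Downward-oriented cusps: the cusp arcs N-W (right cusp) and E-S (left
   cusp) traversed from the upper to the lower endpoint. *)
Definition down_cusps (n : nat) (s : seq (step n)) : nat :=
  count (fun x : step n => (x.2 == (DN, DW)) || (x.2 == (DE, DS))) s.
Definition up_cusps (n : nat) (s : seq (step n)) : nat :=
  count (fun x : step n => (x.2 == (DW, DN)) || (x.2 == (DS, DE))) s.

Definition rotation_number (n : nat) (s : seq (step n)) : rat :=
  ((down_cusps s)%:R - (up_cusps s)%:R) / 2.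

(* Negative crossings (right-hand rule in the xz-plane, x to the right,
   z upward): at a T10 tile the over strand is N-S, the under strand W-E;
   the crossing is negative iff over N->S with under E->W, or over S->N
   with under W->E. *)
Definition neg_crossing (n : nat) (M : mosaic n) (s : seq (step n))
    (c : 'I_n * 'I_n) : bool :=
  (M c.1 c.2 == T10) &&
  ((((c, (DN, DS)) \in s) && ((c, (DE, DW)) \in s)) ||
   (((c, (DS, DN)) \in s) && ((c, (DW, DE)) \in s))).

Definition num_neg_crossings (n : nat) (M : mosaic n) (s : seq (step n)) : nat :=
  #|[set c : 'I_n * 'I_n | neg_crossing M s c]|.

Definition tile_count (n : nat) (M : mosaic n) (t : tile) : nat :=
  #|[set c : 'I_n * 'I_n | M c.1 c.2 == t]|.

From HB Require Import structures.
From mathcomp Require Import all_boot all_order all_algebra.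
From mathcomp Require Import zify lra.
Set Implicit Arguments.
Unset Strict Implicit.
Unset Printing Implicit Defensive.
Import Order.TTheory GRing.Theory Num.Theory.
Local Open Scope ring_scope.

(* Measure heights in the rotated picture.  Along a piece the strand goes up
   one level at an up cusp and at a straight piece traversed upwards, down
   one level at a down cusp and at a straight piece traversed downwards, and
   keeps its height along the horizontal arcs of T1, T3 and T7.  Around the
   closed knot the total change of height is zero, so U - D equals the number
   of straight pieces traversed downwards minus those traversed upwards.  A
   T5 or T6 tile contributes at most one to this count and a crossing at most
   two, which happens only when both strands go down, i.e. at a negative
   crossing. *)

Lemma sum_path_shift (T : Type) (V : nmodType) (r : rel T) (g h : T -> V) :
  (forall x y, r x y -> g y = h x) ->
  forall x0 p, path r x0 p -> \sum_(y <- p) g y = \sum_(x <- belast x0 p) h x.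
Proof.
move=> rgh x0 p; elim: p x0 => [|y p IHp] x0 /=; first by rewrite !big_nil.
by case/andP=> rxy pyp; rewrite !big_cons (IHp _ pyp) (rgh _ _ rxy).
Qed.

Lemma sum_cycle_shift (T : Type) (V : nmodType) (r : rel T) (g h : T -> V)
    (s : seq T) :
  cycle r s -> (forall x y, r x y -> g y = h x) ->
  \sum_(x <- s) g x = \sum_(x <- s) h x.
Proof.
case: s => [|x0 s] cyc rgh; first by rewrite !big_nil.
have := sum_path_shift rgh cyc; rewrite belast_rcons => <-.
by rewrite big_rcons big_cons addrC.
Qed.

Lemma sumz_count (T : Type) (s : seq T) (a : pred T) :
  \sum_(x <- s) (a x : nat)%:Z = (count a s)%:Z.
Proof.
by elim: s => [|x s IHs]; rewrite ?big_nil // big_cons IHs /= PoszD.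
Qed.

Lemma big_seq_partition (V : nmodType) (T : Type) (K : finType) (k : T -> K)
    (s : seq T) (F : T -> V) :
  \sum_(x <- s) F x = \sum_(c : K) \sum_(x <- s | k x == c) F x.
Proof.
rewrite (exchange_big_dep predT) //=; apply: eq_bigr => x _.
by rewrite (big_pred1 (k x)) // => c; rewrite eq_sym.
Qed.

Section Traversal.
Variable n : nat.
Implicit Types (x y : step n) (s : seq (step n)) (c : 'I_n * 'I_n).

Definition upper_edge (d : dir) : bool := (d == DN) || (d == DE).

(* Twice the height of the midpoint of edge [d] of cell [c] after the
   rotation, in units where the center of cell (i, j) has height j - i;
   doubling keeps the half-integer edge heights integral. *)
Definition edge_height c (d : dir) : int :=
  2 * ((val c.2)%:Z - (val c.1)%:Z) + (if upper_edge d then 1 else -1).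

Lemma edge_height_follows x y :
  follows x y -> edge_height y.1 y.2.1 = edge_height x.1 x.2.2.
Proof.
case: x y => [[i j] [a b]] [[i' j'] [a' b']]; rewrite /follows /=.
case: b => /= /andP [/andP [/eqP ? /eqP ?] /eqP ->].
all: by rewrite /edge_height /=; lia.
Qed.

Definition rise x : int :=
  (upper_edge x.2.2 : nat)%:Z - (upper_edge x.2.1 : nat)%:Z.

Lemma sum_rise_cycle s : cycle (@follows n) s -> \sum_(x <- s) rise x = 0.
Proof.
move=> cyc.
have exit_entry : \sum_(x <- s) edge_height x.1 x.2.1 =
                  \sum_(x <- s) edge_height x.1 x.2.2.
  exact: sum_cycle_shift cyc edge_height_follows.
have height_rise x : edge_height x.1 x.2.2 - edge_height x.1 x.2.1 = 2 * rise x.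
  rewrite /edge_height /rise.
  by case: (upper_edge _); case: (upper_edge _); lia.
have : \sum_(x <- s) 2 * rise x = 0.
  by rewrite -(eq_bigr _ (fun x _ => height_rise x)) sumrB exit_entry subrr.
by rewrite -mulr_sumr => /eqP; rewrite mulf_eq0 => /orP [] /eqP.
Qed.

Definition up_cusp x : bool := (x.2 == (DW, DN)) || (x.2 == (DS, DE)).
Definition down_cusp x : bool := (x.2 == (DN, DW)) || (x.2 == (DE, DS)).

Definition straight_descent x : int :=
  (x.2 == (DN, DS) : nat)%:Z - (x.2 == (DS, DN) : nat)%:Z
  + (x.2 == (DE, DW) : nat)%:Z - (x.2 == (DW, DE) : nat)%:Z.

Lemma rise_decomposition x :
  rise x = (up_cusp x : nat)%:Z - (down_cusp x : nat)%:Z - straight_descent x.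
Proof. by case: x => c [a b]; case: a; case: b. Qed.

Lemma cusp_difference_cycle s : cycle (@follows n) s ->
  (up_cusps s)%:Z - (down_cusps s)%:Z = \sum_(x <- s) straight_descent x.
Proof.
move=> cyc; have := sum_rise_cycle cyc.
rewrite (eq_bigr _ (fun x _ => rise_decomposition x)) sumrB sumrB.
by rewrite !sumz_count => /eqP; rewrite subr_eq0 => /eqP.
Qed.

Definition cell_steps s c := [seq x <- s | x.1 == c].
Definition visits s c (p : dir * dir) :=
  count (fun x : step n => x.2 == p) (cell_steps s c).

Lemma mem_visits s c p : ((c, p) \in s) = (0 < visits s c p)%N.
Proof.
rewrite /visits /cell_steps count_filter -has_count -has_pred1.
by apply: eq_has => -[c' p'] /=; rewrite xpair_eqE andbC.
Qed.

Lemma same_piece_swap (p q : dir * dir) :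
  same_piece p (q.2, q.1) = same_piece p q.
Proof. by case: q => a b; rewrite /same_piece orbC. Qed.

Lemma same_piece_sym (p q : dir * dir) : same_piece p q = same_piece q p.
Proof.
case: p q => [a b] [a' b']; rewrite /same_piece /= !xpair_eqE.
by rewrite !(eq_sym a') !(eq_sym b') [(b == a') && _]andbC.
Qed.

Lemma sum_descent_cell s c :
  \sum_(x <- s | x.1 == c) straight_descent x =
  (visits s c (DN, DS))%:Z - (visits s c (DS, DN))%:Z
  + (visits s c (DE, DW))%:Z - (visits s c (DW, DE))%:Z.
Proof. by rewrite -big_filter sumrB big_split sumrB /= !sumz_count. Qed.

Section Cells.
Variables (M : mosaic n) (s : seq (step n)).
Hypothesis steps_on_pieces :
  forall x, x \in s -> has (same_piece x.2) (pieces (M x.1.1 x.1.2)).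
Hypothesis pieces_traversed_once : forall c p, p \in pieces (M c.1 c.2) ->
  count (fun x : step n => (x.1 == c) && same_piece x.2 p) s = 1%N.

Lemma visits_absent c p :
  ~~ has (same_piece p) (pieces (M c.1 c.2)) -> visits s c p = 0%N.
Proof.
move=> absent; apply/eqP; rewrite -leqn0 leqNgt -has_count; apply/hasPn => x.
rewrite mem_filter => /andP [/eqP xc xs]; apply/negP => /eqP xp.
by move: (steps_on_pieces xs); rewrite xc xp (negbTE absent).
Qed.

Lemma visits_pair c p : p.1 != p.2 ->
  (visits s c p + visits s c (p.2, p.1))%N =
  has (same_piece p) (pieces (M c.1 c.2)).
Proof.
move=> proper_p.
have [present | absent] := boolP (has (same_piece p) _); last first.
  have absent' : ~~ has (same_piece (p.2, p.1)) (pieces (M c.1 c.2)).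
    rewrite (eq_has (a2 := same_piece p)) // => q.
    by rewrite same_piece_sym same_piece_swap same_piece_sym.
  by rewrite !visits_absent.
case/hasP: present => q qM pq.
have same_q (e : dir * dir) : same_piece e q = same_piece e p.
  by case/orP: pq => /eqP ->; rewrite ?same_piece_swap.
rewrite [RHS]/= -(pieces_traversed_once qM) /visits /cell_steps.
rewrite !count_filter -count_predUI.
rewrite [X in (_ + X)%N](eq_count (a2 := pred0)) ?count_pred0 ?addn0.
  by apply: eq_count => x /=; rewrite same_q /same_piece -andb_orl andbC.
move=> x /=; case: (x.2 =P p) => //= ->.
case: p proper_p {pq same_q} => a b /= ab.
case: ((a, b) =P (b, a)); rewrite ?andbF // => -[ab_eq _].
by rewrite ab_eq eqxx in ab.
Qed.

Lemma cell_descent_le c :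
  \sum_(x <- s | x.1 == c) straight_descent x <=
  (2 * neg_crossing M s c + (M c.1 c.2 == T5) + (M c.1 c.2 == T6))%N%:Z.
Proof.
rewrite sum_descent_cell /neg_crossing !mem_visits.
have := visits_pair c (p := (DN, DS)) isT.
have := visits_pair c (p := (DE, DW)) isT.
by case: (M c.1 c.2) => /=; lia.
Qed.

End Cells.

End Traversal.

Lemma card_set_sum (T : finType) (P : pred T) :
  #|[set c | P c]| = (\sum_c (P c : nat))%N.
Proof. by rewrite -sum1dep_card big_mkcond. Qed.

Lemma cusp_difference_le (n : nat) (M : mosaic n) (s : seq (step n)) :
  oriented_knot_mosaic M s ->
  (up_cusps s)%:Z - (down_cusps s)%:Z <=
    (2 * num_neg_crossings M s + tile_count M T5 + tile_count M T6)%N%:Z.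
Proof.
case=> _ _ cyc on_pieces once.
rewrite cusp_difference_cycle // (big_seq_partition fst).
apply: le_trans (ler_sum _ (fun c _ => cell_descent_le on_pieces once c)) _.
under eq_bigr do rewrite -natz.
rewrite -natr_sum natz lez_nat /num_neg_crossings /tile_count !card_set_sum.
by rewrite big_split big_split big_distrr.
Qed.

Theorem lemma2p2 (n : nat) (M : mosaic n) (s : seq (step n)) :
  oriented_knot_mosaic M s ->
  (down_cusps s <= up_cusps s)%N ->
  2 * `|rotation_number s| <=
    ((2 * num_neg_crossings M s + tile_count M T5 + tile_count M T6)%N)%:R.
Proof.
move=> knot DU.
have UDK : (up_cusps s <= down_cusps s +
    (2 * num_neg_crossings M s + tile_count M T5 + tile_count M T6))%N.
  by have := cusp_difference_le knot; lia.
have two_rot : 2 * rotation_number s = (down_cusps s)%:R - (up_cusps s)%:R.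
  by rewrite /rotation_number mulrC divfK.
rewrite -[2]normr_nat -normrM two_rot ler0_norm; last first.
  by rewrite subr_le0 ler_nat.
by move: UDK; rewrite -(ler_nat rat) natrD; lra.
Qed.
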